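(* $u_2u_1u_2\subset U'$.
   Context: Let $B_3=\langle s_1,s_2\mid s_1s_2s_1=s_2s_1s_2\rangle$, $R_5=\mathbb{Z}[a,b,c,d,e,e^{-1}]$, and let $H_5$ be the quotient of the group algebra $R_5B_3$ by the relations $s_i^5=as_i^4+bs_i^3+cs_i^2+ds_i+e$ for $i=1,2$; identify $s_i$ with their images. For $i=1,2$ let $u_i$ be the $R_5$-subalgebra of $H_5$ generated by $s_i$. Set $\omega=s_2s_1^2s_2$. For $R_5$-submodules (or elements) $X_1,\dots,X_n$, $X_1\cdots X_n$ denotes the $R_5$-submodule spanned by products $x_1\cdots x_n$, $x_j\in X_j$; sums are sums of submodules. Define $U'=u_1u_2u_1+u_1\omega+u_1\omega^{-1}+u_1s_2^{-1}s_1^2s_2^{-1}u_1+u_1s_2s_1^{-2}s_2u_1+u_1s_2^2s_1^2s_2^2u_1+u_1s_2^{-2}s_1^{-2}s_2^{-2}u_1+u_1s_2s_1^{-2}s_2^2u_1+u_1s_2^{-1}s_1^2s_2^{-2}u_1+u_1s_2^{-1}s_1s_2^{-1}u_1+u_1s_2s_1^{-1}s_2u_1+u_1s_2^{-2}s_1^{-2}s_2^2u_1+u_1s_2^2s_1^2s_2^{-2}u_1+u_1s_2^2s_1^{-2}s_2^2u_1+u_1s_2^{-2}s_1^2s_2^{-2}u_1+u_1s_2^{-2}s_1s_2^{-1}u_1+u_1s_2^{-1}s_1s_2^{-2}u_1$. *)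

From mathcomp Require Import all_boot all_order all_algebra.
Set Implicit Arguments. Unset Strict Implicit. Unset Printing Implicit Defensive.
Import GRing.Theory.
Local Open Scope ring_scope.

(* R-submodules of an R-algebra A are represented as predicates A -> Prop. *)
Section Submodules.
Variables (R : comUnitRingType) (A : algType R).

Definition spanM (P : A -> Prop) : A -> Prop :=
  fun x => exists n (c : 'I_n -> R) (v : 'I_n -> A),
    (forall i, P (v i)) /\ x = \sum_(i < n) c i *: v i.

Definition mulM (X Y : A -> Prop) : A -> Prop :=
  spanM (fun z => exists x y, [/\ X x, Y y & z = x * y]).

Definition addM (X Y : A -> Prop) : A -> Prop :=
  fun z => exists x y, [/\ X x, Y y & z = x + y].

Definition eltM (g : A) : A -> Prop := fun x => x = g.

Definition genM (s : A) : A -> Prop :=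
  fun x => exists n (c : 'I_n -> R), x = \sum_(k < n) c k *: s ^+ k.

Definition subM (X Y : A -> Prop) : Prop := forall x, X x -> Y x.

Definition sandM (u : A -> Prop) (g : A) : A -> Prop := mulM (mulM u (eltM g)) u.

(* The module U' of the paper; t1, t2 are the inverses of s1, s2. *)
Definition Uprime (s1 s2 t1 t2 : A) : A -> Prop :=
  let u1 := genM s1 in let u2 := genM s2 in
  let omega := s2 * s1 ^+ 2 * s2 in
  let omegai := t2 * t1 ^+ 2 * t2 in
  foldr addM (mulM (mulM u1 u2) u1)
  [:: mulM u1 (eltM omega);
      mulM u1 (eltM omegai);
      sandM u1 (t2 * s1 ^+ 2 * t2);
      sandM u1 (s2 * t1 ^+ 2 * s2);
      sandM u1 (s2 ^+ 2 * s1 ^+ 2 * s2 ^+ 2);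
      sandM u1 (t2 ^+ 2 * t1 ^+ 2 * t2 ^+ 2);
      sandM u1 (s2 * t1 ^+ 2 * s2 ^+ 2);
      sandM u1 (t2 * s1 ^+ 2 * t2 ^+ 2);
      sandM u1 (t2 * s1 * t2);
      sandM u1 (s2 * t1 * s2);
      sandM u1 (t2 ^+ 2 * t1 ^+ 2 * s2 ^+ 2);
      sandM u1 (s2 ^+ 2 * s1 ^+ 2 * t2 ^+ 2);
      sandM u1 (s2 ^+ 2 * t1 ^+ 2 * s2 ^+ 2);
      sandM u1 (t2 ^+ 2 * s1 ^+ 2 * t2 ^+ 2);
      sandM u1 (t2 ^+ 2 * s1 * t2);
      sandM u1 (t2 * s1 * t2 ^+ 2)].

End Submodules.

From mathcomp Require Import all_boot all_order all_algebra.
Set Implicit Arguments. Unset Strict Implicit. Unset Printing Implicit Defensive.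
Import GRing.Theory.
Local Open Scope ring_scope.

(* U' is an R-submodule stable under multiplication by s1 and t1 = s1^-1 on
   both sides: its summands are u1 g u1 and u1 omega^(+-1), and omega = s2 s1^2 s2
   commutes with s1 by two uses of the braid relation.  By linearity it thus
   suffices that every word s2^p s1^q s2^r (p, q, r integers) lies in U', and a
   word may be multiplied by powers of s1 on either side.
   Since s_i^5 is a combination of lower powers with a unit constant term, every
   integer power of s_i is a combination of s_i^-2, ..., s_i^2, so one may assume
   -2 <= p, q, r <= 2.  Words with an exponent 0 lie in u1 u2 u1, sixteen more are
   the elements sandwiched in U', and each remaining one is related to an earlier
   one by a braid identity such as s2^p s1 s2^r = s1 (s2 s1^p s2^(r-1)), sometimes
   after expanding an exponent +-3 with the quintic relation. *)

(* [t] stands for s^-1: A is not a unitRingType. *)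
Definition powz (A : pzRingType) (s t : A) (k : int) : A :=
  match k with Posz n => s ^+ n | Negz n => t ^+ n.+1 end.

Lemma powz_swap (A : pzRingType) (s t : A) k : powz t s k = powz s t (- k).
Proof. by case: k => [[|n]|n]. Qed.

Section IntPowers.
Variables (A : pzRingType) (s t : A).
Hypotheses (st : s * t = 1) (ts : t * s = 1).

Lemma powzS k : powz s t (k + 1) = powz s t k * s.
Proof.
case: k => [n|[|n]]; first by rewrite -PoszD addn1 /= exprSr.
  by rewrite /= expr1 ts.
have -> : Negz n.+1 + 1 = Negz n by rewrite !NegzE -[(n.+2)%N]addn1 PoszD opprD addrNK.
by rewrite /= [in RHS]exprSr -mulrA ts mulr1.
Qed.

Lemma powzB1 k : powz s t (k - 1) = powz s t k * t.
Proof. by rewrite -{2}(subrK 1 k) powzS -mulrA st mulr1. Qed.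

Lemma powzD m n : powz s t (m + n) = powz s t m * powz s t n.
Proof.
elim/int_rect: n => [|n IH|n IH]; first by rewrite addr0 mulr1.
  by rewrite -addn1 PoszD addrA !powzS IH mulrA.
by rewrite -addn1 PoszD opprD !addrA !powzB1 IH -mulrA.
Qed.

End IntPowers.

Lemma conj_inv (A : pzRingType) (x u u' v v' : A) :
  u * u' = 1 -> v' * v = 1 -> x * u = v * x -> x * u' = v' * x.
Proof.
move=> uu' v'v xu.
by rewrite -[x * u']mul1r -v'v -mulrA (mulrA v) -xu -mulrA uu' mulr1.
Qed.

Lemma powz_conj (A : pzRingType) (x u u' v v' : A) :
  u * u' = 1 -> v' * v = 1 -> x * u = v * x ->
  forall k, x * powz u u' k = powz v v' k * x.
Proof.
move=> uu' v'v xu; have xu' := conj_inv uu' v'v xu.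
have xexp w w' : x * w = w' * x -> forall n, x * w ^+ n = w' ^+ n * x.
  by move=> xw; elim=> [|n IH]; rewrite ?mulr1 ?mul1r // !exprSr mulrA IH -!mulrA xw.
by case=> n; apply: xexp.
Qed.

Definition word212 (A : pzRingType) (s1 s2 t1 t2 : A) (p q r : int) : A :=
  powz s2 t2 p * powz s1 t1 q * powz s2 t2 r.

Lemma word212_swap (A : pzRingType) (s1 s2 t1 t2 : A) p q r :
  word212 t1 t2 s1 s2 p q r = word212 s1 s2 t1 t2 (- p) (- q) (- r).
Proof. by rewrite /word212 !(powz_swap s1) !(powz_swap s2). Qed.

Definition braid_units (A : pzRingType) (s1 s2 t1 t2 : A) :=
  [/\ s1 * t1 = 1, t1 * s1 = 1, s2 * t2 = 1, t2 * s2 = 1 & s1 * s2 * s1 = s2 * s1 * s2].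

Section BraidRelations.
Variables (A : pzRingType) (s1 s2 t1 t2 : A).
Hypothesis hB : braid_units s1 s2 t1 t2.

Let st1 : s1 * t1 = 1. Proof. by case: hB. Qed.
Let ts1 : t1 * s1 = 1. Proof. by case: hB. Qed.
Let st2 : s2 * t2 = 1. Proof. by case: hB. Qed.
Let ts2 : t2 * s2 = 1. Proof. by case: hB. Qed.
Let braid : s1 * s2 * s1 = s2 * s1 * s2. Proof. by case: hB. Qed.

Local Notation p1 := (powz s1 t1).
Local Notation p2 := (powz s2 t2).
Local Notation T := (word212 s1 s2 t1 t2).

Lemma braid_units_inv : braid_units t1 t2 s1 s2.
Proof.
have inv3 x y z x' y' z' : x * x' = 1 -> y * y' = 1 -> z * z' = 1 ->
    x * y * z * (z' * y' * x') = 1.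
  by move=> xx' yy' zz'; rewrite !mulrA -(mulrA _ z) zz' mulr1 -(mulrA _ y) yy' mulr1.
have inv_uniq (x y z : A) : y * x = 1 -> x * z = 1 -> z = y.
  by move=> yx xz; rewrite -[z]mul1r -yx -mulrA xz mulr1.
split=> //; apply: (inv_uniq (s2 * s1 * s2)); first exact: inv3.
by rewrite -braid inv3.
Qed.

Lemma conj_s1s2 k : s1 * s2 * p1 k = p2 k * (s1 * s2).
Proof. by apply: powz_conj => //; rewrite braid mulrA. Qed.

Lemma conj_s2s1 k : s2 * s1 * p2 k = p1 k * (s2 * s1).
Proof. by apply: powz_conj => //; rewrite -braid mulrA. Qed.

Lemma word212_mid1_l p r : T p 1 r = s1 * T 1 p (r - 1).
Proof.
rewrite /word212 [p2 r](_ : _ = s2 * p2 (r - 1)); last first.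
  by rewrite -[s2]/(p2 1) -powzD // addrC subrK.
by rewrite /= expr1 !mulrA conj_s1s2 !mulrA.
Qed.

Lemma word212_mid1_r p r : T p 1 r = T (p - 1) r 1 * s1.
Proof.
rewrite /word212 [p2 p](_ : _ = p2 (p - 1) * s2); last by rewrite -powzS // subrK.
by rewrite /= expr1 -!mulrA (mulrA s2) conj_s2s1 !mulrA.
Qed.

Lemma conj_s2 k : s2 * p1 k * t2 = t1 * p2 k * s1.
Proof.
rewrite -[LHS]mul1r -ts1 -!mulrA (mulrA s1) (mulrA (s1 * s2)) conj_s1s2.
by rewrite !mulrA -(mulrA _ s2) st2 mulr1.
Qed.

(* The one-letter moves word212_mid1_* and word212_midN1_* never reach
   s2^2 t1^2 t2^2 or its mirror image t2^2 s1^2 s2^2 from a word of U'. *)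
Lemma word212_2N2N2 : T 2 (-2) (-2) = t1 * T (-2) (-2) 2 * s1.
Proof.
have -> : T 2 (-2) (-2) = s2 * (s2 * p1 (-2) * t2) * t2.
  by rewrite /word212 /= !expr2 !mulrA.
rewrite conj_s2 /=.
have -> : s2 * (t1 * t2 ^+ 2 * s1) * t2 = s2 * p1 (-1) * t2 * (t2 * s1 * t2).
  by rewrite /= expr1 expr2 !mulrA.
have s1t2 : s1 * t2 = t2 * t1 * s2 * s1.
  by rewrite -!mulrA (mulrA t1) -(conj_s2 1) !mulrA ts2 mul1r.
rewrite conj_s2 [LHS](_ : _ = t1 * t2 * (s1 * t2) * s1 * t2); last first.
  by rewrite /= expr1 !mulrA.
rewrite s1t2 [LHS](_ : _ = t1 * t2 * t2 * t1 * (s2 * p1 2 * t2)); last first.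
  by rewrite /= expr2 !mulrA.
by rewrite conj_s2 /word212 /= !expr2 !mulrA.
Qed.

End BraidRelations.

Section BraidRelationsInv.
Variables (A : pzRingType) (s1 s2 t1 t2 : A).
Hypothesis hB : braid_units s1 s2 t1 t2.

Let hBinv := braid_units_inv hB.

Local Notation T := (word212 s1 s2 t1 t2).

Lemma word212_midN1_l p r : T p (-1) r = t1 * T (-1) p (r + 1).
Proof.
have := word212_mid1_l hBinv (- p) (- r).
by rewrite !(word212_swap s1 s2 t1 t2) !opprK opprB opprK addrC.
Qed.

Lemma word212_midN1_r p r : T p (-1) r = T (p + 1) r (-1) * t1.
Proof.
have := word212_mid1_r hBinv (- p) (- r).
by rewrite !(word212_swap s1 s2 t1 t2) !opprK opprB opprK addrC.
Qed.

Lemma word212_N222 : T (-2) 2 2 = s1 * T 2 2 (-2) * t1.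
Proof. by have := word212_2N2N2 hBinv; rewrite !(word212_swap s1 s2 t1 t2) !opprK. Qed.

End BraidRelationsInv.

Section Submodules.
Variables (R : comUnitRingType) (A : algType R).

Definition submod (S : A -> Prop) :=
  [/\ S 0, forall x y, S x -> S y -> S (x + y) & forall r x, S x -> S (r *: x)].

Lemma submod_sum (S : A -> Prop) n (c : 'I_n -> R) (v : 'I_n -> A) :
  submod S -> (forall i, S (v i)) -> S (\sum_(i < n) c i *: v i).
Proof. by case=> S0 SD SZ Sv; elim/big_ind: _ => // i _; apply: SZ. Qed.

Lemma submod_preim (S : A -> Prop) (f : A -> A) :
  submod S -> linear f -> submod (fun x => S (f x)).
Proof.
case=> S0 SD SZ lin_f.
have f0 : f 0 = 0 by rewrite -[0 in LHS](subrr 0) (zmod_morphism_linear lin_f) subrr.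
split=> [|x y Sx Sy|r x Sx]; first by rewrite f0.
  by rewrite -[x]scale1r lin_f scale1r; apply: SD.
by rewrite -[r *: x]addr0 lin_f f0 addr0; apply: SZ.
Qed.

Lemma linear_mull (m : A) : linear (fun x => m * x).
Proof. by move=> r x y; rewrite mulrDr scalerAr. Qed.

Lemma linear_mulr (m : A) : linear (fun x => x * m).
Proof. by move=> r x y; rewrite mulrDl scalerAl. Qed.

Lemma spanM_submod (P : A -> Prop) : submod (spanM P).
Proof.
split.
- by exists 0%N, (fun _ => 0), (fun _ => 0); split; [case | rewrite big_ord0].
- move=> _ _ [n1 [c1 [v1 [P1 ->]]]] [n2 [c2 [v2 [P2 ->]]]].
  exists (n1 + n2)%N, (fun i => match split i with inl j => c1 j | inr j => c2 j end),
    (fun i => match split i with inl j => v1 j | inr j => v2 j end); split.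
    by move=> i; case: (split i).
  by rewrite big_split_ord /=; congr (_ + _); apply: eq_bigr => i _;
    rewrite ?(unsplitK (inl _ i)) ?(unsplitK (inr _ i)).
- move=> r _ [n [c [v [Pv ->]]]]; exists n, (fun i => r * c i), v; split=> //.
  by rewrite scaler_sumr; apply: eq_bigr => i _; rewrite scalerA.
Qed.

Lemma spanM_sub (P S : A -> Prop) :
  submod S -> (forall v, P v -> S v) -> subM (spanM P) S.
Proof. by move=> SS PS _ [n [c [v [Pv ->]]]]; apply: submod_sum => // i; apply/PS/Pv. Qed.

Lemma spanM_mem (P : A -> Prop) x : P x -> spanM P x.
Proof.
by move=> Px; exists 1%N, (fun _ => 1), (fun _ => x); rewrite big_ord1 scale1r.
Qed.

Lemma mulM_mem (X Y : A -> Prop) x y : X x -> Y y -> mulM X Y (x * y).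
Proof. by move=> Xx Yy; apply: spanM_mem; exists x, y. Qed.

Lemma addM_submod (X Y : A -> Prop) : submod X -> submod Y -> submod (addM X Y).
Proof.
case=> X0 XD XZ [Y0 YD YZ]; split.
- by exists 0, 0; rewrite addr0.
- move=> _ _ [x1 [y1 [Xx1 Yy1 ->]]] [x2 [y2 [Xx2 Yy2 ->]]].
  by exists (x1 + x2), (y1 + y2); rewrite addrACA; split; [apply: XD | apply: YD |].
- move=> r _ [x [y [Xx Yy ->]]].
  by exists (r *: x), (r *: y); rewrite scalerDr; split; [apply: XZ | apply: YZ |].
Qed.

Lemma addM_meml (X Y : A -> Prop) x : X x -> Y 0 -> addM X Y x.
Proof. by move=> Xx Y0; exists x, 0; rewrite addr0. Qed.

Lemma addM_memr (X Y : A -> Prop) y : X 0 -> Y y -> addM X Y y.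
Proof. by move=> X0 Yy; exists 0, y; rewrite add0r. Qed.

Lemma genM_pow (s : A) k : genM s (s ^+ k).
Proof.
exists k.+1, (fun i => ((i : nat) == k)%:R).
rewrite big_ord_recr /= eqxx scale1r big1 ?add0r // => i _.
by rewrite ltn_eqF // scale0r.
Qed.

Lemma spanM0 (P : A -> Prop) : spanM P 0.
Proof. by case: (spanM_submod P). Qed.

Lemma addM0 (X Y : A -> Prop) : X 0 -> Y 0 -> addM X Y 0.
Proof. by move=> X0 Y0; exists 0, 0; rewrite addr0. Qed.

Lemma sandM_self (s g : A) : sandM (genM s) g g.
Proof.
rewrite /sandM -[X in mulM _ _ X]mulr1 -[X in mulM _ _ (X * 1)]mul1r -(expr0 s).
by apply: mulM_mem; [apply: mulM_mem|]; try apply: genM_pow.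
Qed.

Lemma mulM_eltM_self (s g : A) : mulM (genM s) (eltM g) g.
Proof.
by rewrite -[X in mulM _ _ X]mul1r -(expr0 s); apply: mulM_mem; try apply: genM_pow.
Qed.

Lemma addM_homo (f : A -> A) (X Y : A -> Prop) : {morph f : x y / x + y} ->
  {homo f : x / X x} -> {homo f : y / Y y} -> {homo f : z / addM X Y z}.
Proof.
by move=> fD fX fY _ [x [y [Xx Yy ->]]]; exists (f x), (f y); rewrite fD; split; auto.
Qed.

Lemma mulM_homol (m : A) (X Y : A -> Prop) :
  {homo (fun x => m * x) : x / X x} -> {homo (fun z => m * z) : z / mulM X Y z}.
Proof.
move=> mX z; apply: (spanM_sub (S := fun z => mulM X Y (m * z))).
  exact: submod_preim (spanM_submod _) (linear_mull m).
by move=> _ [x [y [Xx Yy ->]]]; rewrite mulrA; apply: mulM_mem; [apply: mX |].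
Qed.

Lemma mulM_homor (m : A) (X Y : A -> Prop) :
  {homo (fun y => y * m) : y / Y y} -> {homo (fun z => z * m) : z / mulM X Y z}.
Proof.
move=> mY z; apply: (spanM_sub (S := fun z => mulM X Y (z * m))).
  exact: submod_preim (spanM_submod _) (linear_mulr m).
by move=> _ [x [y [Xx Yy ->]]]; rewrite -mulrA; apply: mulM_mem; [| apply: mY].
Qed.

Lemma mulM_eltM_homor (m g : A) (X : A -> Prop) : GRing.comm g m ->
  {homo (fun x => x * m) : x / X x} ->
  {homo (fun z => z * m) : z / mulM X (eltM g) z}.
Proof.
move=> gm mX z; apply: (spanM_sub (S := fun z => mulM X (eltM g) (z * m))).
  exact: submod_preim (spanM_submod _) (linear_mulr m).
move=> _ [x [_ [Xx -> ->]]]; rewrite -mulrA gm mulrA.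
by apply: mulM_mem; [apply: mX |].
Qed.

Lemma genM_sub (s : A) (S : A -> Prop) :
  submod S -> (forall k, S (s ^+ k)) -> subM (genM s) S.
Proof. by move=> SS Ss _ [n [c ->]]; apply: submod_sum. Qed.

Lemma genM_sandwich (s x y : A) (S : A -> Prop) : submod S ->
  (forall k, S (x * s ^+ k * y)) -> subM (genM s) (fun w => S (x * w * y)).
Proof.
move=> SS Sxy; apply: genM_sub => //; apply: submod_preim SS _.
by move=> r u v; rewrite mulrDr mulrDl scalerAl scalerAr.
Qed.

Lemma genM_submod (s : A) : submod (genM s).
Proof.
have genE x : genM s x <-> exists n (f : nat -> R), x = \sum_(k < n) f k *: s ^+ k.
  split=> [[n [c ->]]|[n [f ->]]]; last by exists n, (fun i => f i).
  exists n, (fun k => if insub k is Some i then c i else 0).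
  by apply: eq_bigr => i _; rewrite valK.
split.
- by exists 0%N, (fun _ => 0); rewrite big_ord0.
- move=> _ _ /genE[n1 [f1 ->]] /genE[n2 [f2 ->]]; apply/genE.
  exists (maxn n1 n2),
    (fun k => (if (k < n1)%N then f1 k else 0) + (if (k < n2)%N then f2 k else 0)).
  rewrite (big_ord_widen _ (fun k => f1 k *: s ^+ k) (leq_maxl n1 n2)).
  rewrite (big_ord_widen _ (fun k => f2 k *: s ^+ k) (leq_maxr n1 n2)).
  rewrite big_mkcond [X in _ + X]big_mkcond -big_split /=.
  apply: eq_bigr => i _; rewrite scalerDl.
  by case: ifP => _; case: ifP => _; rewrite ?scale0r.
- move=> r _ [n [c ->]]; exists n, (fun i => r * c i).
  by rewrite scaler_sumr; apply: eq_bigr => i _; rewrite scalerA.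
Qed.

Lemma genM_mull (s : A) : {homo (fun x => s * x) : x / genM s x}.
Proof.
apply: genM_sub; first exact: submod_preim (genM_submod s) (linear_mull s).
by move=> k; rewrite -exprS; apply: genM_pow.
Qed.

Lemma genM_mulr (s : A) : {homo (fun x => x * s) : x / genM s x}.
Proof.
apply: genM_sub; first exact: submod_preim (genM_submod s) (linear_mulr s).
by move=> k; rewrite -exprSr; apply: genM_pow.
Qed.

Lemma recurrence_submod (S : A -> Prop) (f : int -> A) (a b c d e : R) :
  submod S -> e \is a GRing.unit ->
  (forall k, f (k + 5) =
    a *: f (k + 4) + b *: f (k + 3) + c *: f (k + 2) + d *: f (k + 1) + e *: f k) ->
  S (f (-2)) -> S (f (-1)) -> S (f 0) -> S (f 1) -> S (f 2) -> forall k, S (f k).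
Proof.
case=> S0 SD SZ eU rec fm2 fm1 f0 f1 f2.
have SN x : S x -> S (- x) by move=> Sx; rewrite -scaleN1r; apply: SZ.
pose window j := forall m : nat, (m < 5)%N -> S (f (j + m%:Z)).
have window0 j : window j -> S (f j) by move=> wj; have := wj 0%N isT; rewrite addr0.
have up j : window j -> window (j + 1).
  move=> wj [|[|[|[|[|m]]]]] // _; rewrite -addrA; try by apply: wj.
  rewrite [j + _](_ : _ = j + 5) // rec.
  by repeat apply: (SD); apply: (SZ); [apply: wj.. | apply: window0].
have down j : window j -> window (j - 1).
  move=> wj [_|m m5]; last by rewrite -addn1 PoszD addrA addrAC subrK; apply: wj; apply: ltnW.
  have ef : e *: f (j - 1) = f (j - 1 + 5) -
      (a *: f (j - 1 + 4) + b *: f (j - 1 + 3) + c *: f (j - 1 + 2) + d *: f (j - 1 + 1)).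
    by rewrite rec [RHS]addrC addKr.
  rewrite addr0 -[f _]scale1r -(mulVr eU) -scalerA ef -!addrA.
  by repeat (apply: (SD) || apply: (SN) || apply: (SZ)); apply: wj.
have wm2 : window (-2) by case=> [|[|[|[|[|m]]]]].
have w0 : window 0 := up _ (up _ wm2).
move=> k; apply: window0; elim/int_rect: k => [//|n|n] wn.
  by rewrite -addn1 PoszD; apply: up.
by rewrite -addn1 PoszD opprD; apply: down.
Qed.

End Submodules.

Section Quintic.
Variables (R : comUnitRingType) (A : algType R) (a b c d e : R) (s t : A).
Hypotheses (st : s * t = 1) (ts : t * s = 1)
  (quintic : s ^+ 5 = a *: s ^+ 4 + b *: s ^+ 3 + c *: s ^+ 2 + d *: s + e%:A).

Local Notation p := (powz s t).

Lemma powz_rec k :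
  p (k + 5) = a *: p (k + 4) + b *: p (k + 3) + c *: p (k + 2) + d *: p (k + 1) + e *: p k.
Proof.
have q5 : p 5 = a *: p 4 + b *: p 3 + c *: p 2 + d *: p 1 + e *: p 0 := quintic.
by rewrite !(powzD st ts k) q5 !mulrDr -!scalerAr /= mulr1.
Qed.

Hypothesis eU : e \is a GRing.unit.

Lemma genM_inv : genM s t.
Proof.
have q4 : p 4 = a *: p 3 + b *: p 2 + c *: p 1 + d *: p 0 + e *: p (-1) := powz_rec (-1).
have {}q4 : e *: p (-1) = p 4 - (a *: p 3 + b *: p 2 + c *: p 1 + d *: p 0).
  by rewrite q4 [RHS]addrC addKr.
have [G0 GD GZ] := genM_submod s.
have -> : t = e^-1 *: (e *: p (-1)) by rewrite scalerA mulVr // scale1r.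
rewrite q4 -scaleN1r; apply: (GZ); apply: (GD); first exact: genM_pow.
by apply: (GZ); repeat apply: (GD); apply: (GZ); apply: genM_pow.
Qed.

Lemma genM_mull_inv : {homo (fun x => t * x) : x / genM s x}.
Proof.
apply: genM_sub; first exact: submod_preim (genM_submod s) (linear_mull t).
by case=> [|k]; rewrite ?mulr1 ?exprS ?mulrA ?ts ?mul1r; [apply: genM_inv | apply: genM_pow].
Qed.

Lemma genM_mulr_inv : {homo (fun x => x * t) : x / genM s x}.
Proof.
apply: genM_sub; first exact: submod_preim (genM_submod s) (linear_mulr t).
by case=> [|k]; rewrite ?mul1r ?exprSr -?mulrA ?st ?mulr1; [apply: genM_inv | apply: genM_pow].
Qed.

Lemma genM_powz k : genM s (p k).
Proof.
case: k => n /=; first exact: genM_pow.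
elim: n => [|n IH]; first exact: genM_inv.
by rewrite exprS; apply: genM_mull_inv.
Qed.

Lemma submod_powz (S : A -> Prop) (x y : A) : submod S ->
  S (x * p (-2) * y) -> S (x * p (-1) * y) -> S (x * p 0 * y) -> S (x * p 1 * y) ->
  S (x * p 2 * y) -> forall k, S (x * p k * y).
Proof.
move=> SS Sm2 Sm1 S0 S1 S2.
apply: (recurrence_submod (f := fun k => x * p k * y) SS eU) => // k.
by rewrite powz_rec !mulrDr !mulrDl -!scalerAr -!scalerAl.
Qed.

End Quintic.

Section Uprime.
Variables (R : comUnitRingType) (A : algType R) (a b c d e : R) (s1 s2 t1 t2 : A).
Hypotheses (eU : e \is a GRing.unit) (hB : braid_units s1 s2 t1 t2)
  (quintic1 : s1 ^+ 5 = a *: s1 ^+ 4 + b *: s1 ^+ 3 + c *: s1 ^+ 2 + d *: s1 + e%:A)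
  (quintic2 : s2 ^+ 5 = a *: s2 ^+ 4 + b *: s2 ^+ 3 + c *: s2 ^+ 2 + d *: s2 + e%:A).

Let st1 : s1 * t1 = 1. Proof. by case: hB. Qed.
Let ts1 : t1 * s1 = 1. Proof. by case: hB. Qed.
Let st2 : s2 * t2 = 1. Proof. by case: hB. Qed.
Let ts2 : t2 * s2 = 1. Proof. by case: hB. Qed.
Let braid : s1 * s2 * s1 = s2 * s1 * s2. Proof. by case: hB. Qed.

Local Notation U := (Uprime s1 s2 t1 t2).
Local Notation T := (word212 s1 s2 t1 t2).
Local Notation omega := (s2 * s1 ^+ 2 * s2).
Local Notation omegaV := (t2 * t1 ^+ 2 * t2).

Lemma Uprime_submod : submod U.
Proof. by rewrite /Uprime /=; repeat apply: addM_submod; apply: spanM_submod. Qed.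

Lemma omega_comm_s1 : GRing.comm omega s1.
Proof.
rewrite /GRing.comm; have -> : omega * s1 = s2 * s1 * (s1 * s2 * s1) by rewrite expr2 !mulrA.
by rewrite braid !mulrA -braid.
Qed.

Lemma omegaV_omega : omegaV * omega = 1.
Proof.
by rewrite !expr2 !mulrA -(mulrA _ t2) ts2 mulr1 -(mulrA _ t1) ts1 mulr1
  -(mulrA _ t1) ts1 mulr1 ts2.
Qed.

Lemma omega_omegaV : omega * omegaV = 1.
Proof.
by rewrite !expr2 !mulrA -(mulrA _ s2) st2 mulr1 -(mulrA _ s1) st1 mulr1
  -(mulrA _ s1) st1 mulr1 st2.
Qed.

Lemma Uprime_mull m :
  {homo (fun x => m * x) : x / genM s1 x} -> {homo (fun x => m * x) : x / U x}.
Proof.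
move=> m1.
have mD : {morph (fun x => m * x) : x y / x + y} by move=> x y; rewrite mulrDr.
by rewrite /Uprime /=; repeat apply: (addM_homo mD); repeat apply: mulM_homol.
Qed.

Lemma Uprime_mulr m : GRing.comm omega m -> GRing.comm omegaV m ->
  {homo (fun x => x * m) : x / genM s1 x} -> {homo (fun x => x * m) : x / U x}.
Proof.
move=> om omV m1.
have mD : {morph (fun x => x * m) : x y / x + y} by move=> x y; rewrite mulrDl.
rewrite /Uprime /=; repeat apply: (addM_homo mD).
all: first [ exact: mulM_homor m1
           | exact: mulM_eltM_homor om m1 | exact: mulM_eltM_homor omV m1 ].
Qed.

Lemma Uprime_powzl k : {homo (fun x => powz s1 t1 k * x) : x / U x}.
Proof.
have expl m : {homo (fun x => m * x) : x / U x} ->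
    forall n, {homo (fun x => m ^+ n * x) : x / U x}.
  by move=> mU; elim=> [|n IH] x Ux; rewrite ?mul1r // exprS -mulrA; apply/mU/IH.
case: k => n; apply: expl; apply: Uprime_mull; first exact: genM_mull.
exact: (genM_mull_inv st1 ts1 quintic1).
Qed.

Lemma Uprime_powzr k : {homo (fun x => x * powz s1 t1 k) : x / U x}.
Proof.
have omega_t1 : GRing.comm omega t1 := conj_inv st1 ts1 omega_comm_s1.
have omegaV_s1 : GRing.comm omegaV s1 :=
  commr_sym (conj_inv omega_omegaV omegaV_omega (commr_sym omega_comm_s1)).
have omegaV_t1 : GRing.comm omegaV t1 := conj_inv st1 ts1 omegaV_s1.
have expr m : {homo (fun x => x * m) : x / U x} ->
    forall n, {homo (fun x => x * m ^+ n) : x / U x}.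
  by move=> mU; elim=> [|n IH] x Ux; rewrite ?mulr1 // exprSr mulrA; apply/mU/IH.
case: k => n; apply: expr.
  by apply: (Uprime_mulr omega_comm_s1 omegaV_s1); apply: genM_mulr.
by apply: (Uprime_mulr omega_t1 omegaV_t1); apply: (genM_mulr_inv st1 ts1 quintic1).
Qed.

Lemma Uprime_powzlE k x : U (powz s1 t1 k * x) <-> U x.
Proof.
split=> [|/(Uprime_powzl k)] //.
by move/(Uprime_powzl (- k)); rewrite mulrA -powzD // addNr mul1r.
Qed.

Lemma Uprime_powzrE k x : U (x * powz s1 t1 k) <-> U x.
Proof.
split=> [|/(Uprime_powzr k)] //.
by move/(Uprime_powzr (- k)); rewrite -mulrA -powzD // addrN mulr1.
Qed.

Ltac zero_in_sum := solve [repeat apply: addM0; apply: spanM0].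
Ltac in_summand := rewrite /Uprime /=; repeat first
  [ apply: addM_meml; [solve [apply: sandM_self | apply: mulM_eltM_self] | zero_in_sum]
  | apply: addM_memr; [zero_in_sum | idtac] ].

Lemma Uprime_powz2 k : U (powz s2 t2 k).
Proof.
have -> : powz s2 t2 k = s1 ^+ 0 * powz s2 t2 k * s1 ^+ 0 by rewrite expr0 mul1r mulr1.
in_summand.
apply: mulM_mem; [apply: mulM_mem|]; try exact: genM_pow.
exact: (genM_powz st2 ts2 quintic2 eU).
Qed.

Lemma Uprime_T0l q r : U (T 0 q r).
Proof. by rewrite /word212 mul1r; apply: Uprime_powzl; apply: Uprime_powz2. Qed.

Lemma Uprime_T0m p r : U (T p 0 r).
Proof. by rewrite /word212 mulr1 -powzD //; apply: Uprime_powz2. Qed.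

Lemma Uprime_T0r p q : U (T p q 0).
Proof. by rewrite /word212 mulr1; apply: Uprime_powzr; apply: Uprime_powz2. Qed.

Lemma Uprime_T_mid1_l p r : U (T p 1 r) <-> U (T 1 p (r - 1)).
Proof. by rewrite (word212_mid1_l hB); apply: (Uprime_powzlE 1). Qed.

Lemma Uprime_T_mid1_r p r : U (T p 1 r) <-> U (T (p - 1) r 1).
Proof. by rewrite (word212_mid1_r hB); apply: (Uprime_powzrE 1). Qed.

Lemma Uprime_T_midN1_l p r : U (T p (-1) r) <-> U (T (-1) p (r + 1)).
Proof. by rewrite (word212_midN1_l hB); apply: (Uprime_powzlE (-1)). Qed.

Lemma Uprime_T_midN1_r p r : U (T p (-1) r) <-> U (T (p + 1) r (-1)).
Proof. by rewrite (word212_midN1_r hB); apply: (Uprime_powzrE (-1)). Qed.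

Lemma Uprime_T_window_l q r :
  U (T (-2) q r) -> U (T (-1) q r) -> U (T 0 q r) -> U (T 1 q r) -> U (T 2 q r) ->
  forall p, U (T p q r).
Proof.
have TE p : T p q r = 1 * powz s2 t2 p * (powz s1 t1 q * powz s2 t2 r) by rewrite mul1r mulrA.
move=> Um2 Um1 U0 U1 U2 p; rewrite TE.
by apply: (submod_powz st2 ts2 quintic2 eU Uprime_submod); rewrite -TE.
Qed.

Lemma Uprime_T_window_m p r :
  U (T p (-2) r) -> U (T p (-1) r) -> U (T p 0 r) -> U (T p 1 r) -> U (T p 2 r) ->
  forall q, U (T p q r).
Proof. exact: (submod_powz st1 ts1 quintic1 eU Uprime_submod). Qed.

Lemma Uprime_T_window_r p q :
  U (T p q (-2)) -> U (T p q (-1)) -> U (T p q 0) -> U (T p q 1) -> U (T p q 2) ->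
  forall r, U (T p q r).
Proof.
have TE r : T p q r = powz s2 t2 p * powz s1 t1 q * powz s2 t2 r * 1 by rewrite mulr1.
move=> Um2 Um1 U0 U1 U2 r; rewrite TE.
by apply: (submod_powz st2 ts2 quintic2 eU Uprime_submod); rewrite -TE.
Qed.

Lemma Uprime_T_1_2_1 : U (T 1 2 1). Proof. by in_summand. Qed.
Lemma Uprime_T_m1_m2_m1 : U (T (-1) (-2) (-1)). Proof. by in_summand. Qed.
Lemma Uprime_T_m1_2_m1 : U (T (-1) 2 (-1)). Proof. by in_summand. Qed.
Lemma Uprime_T_1_m2_1 : U (T 1 (-2) 1). Proof. by in_summand. Qed.
Lemma Uprime_T_2_2_2 : U (T 2 2 2). Proof. by in_summand. Qed.
Lemma Uprime_T_m2_m2_m2 : U (T (-2) (-2) (-2)). Proof. by in_summand. Qed.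
Lemma Uprime_T_1_m2_2 : U (T 1 (-2) 2). Proof. by in_summand. Qed.
Lemma Uprime_T_m1_2_m2 : U (T (-1) 2 (-2)). Proof. by in_summand. Qed.
Lemma Uprime_T_m1_1_m1 : U (T (-1) 1 (-1)). Proof. by in_summand. Qed.
Lemma Uprime_T_1_m1_1 : U (T 1 (-1) 1). Proof. by in_summand. Qed.
Lemma Uprime_T_m2_m2_2 : U (T (-2) (-2) 2). Proof. by in_summand. Qed.
Lemma Uprime_T_2_2_m2 : U (T 2 2 (-2)). Proof. by in_summand. Qed.
Lemma Uprime_T_2_m2_2 : U (T 2 (-2) 2). Proof. by in_summand. Qed.
Lemma Uprime_T_m2_2_m2 : U (T (-2) 2 (-2)). Proof. by in_summand. Qed.
Lemma Uprime_T_m2_1_m1 : U (T (-2) 1 (-1)). Proof. by in_summand. Qed.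
Lemma Uprime_T_m1_1_m2 : U (T (-1) 1 (-2)). Proof. by in_summand. Qed.

Lemma Uprime_T_m2_m2_1 : U (T (-2) (-2) 1).
Proof. exact: (@Uprime_T_mid1_r (-1) (-2)).1 Uprime_T_m1_1_m2. Qed.
Lemma Uprime_T_m2_m1_m2 : U (T (-2) (-1) (-2)).
Proof. exact: (@Uprime_T_midN1_l (-2) (-2)).2 Uprime_T_m1_m2_m1. Qed.
Lemma Uprime_T_m2_m1_m1 : U (T (-2) (-1) (-1)).
Proof. exact: (@Uprime_T_midN1_l (-2) (-1)).2 (@Uprime_T0r (-1) (-2)). Qed.
Lemma Uprime_T_m2_m1_1 : U (T (-2) (-1) 1).
Proof. exact: (@Uprime_T_midN1_r (-2) 1).2 Uprime_T_m1_1_m1. Qed.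
Lemma Uprime_T_m2_m1_2 : U (T (-2) (-1) 2).
Proof. exact: (@Uprime_T_midN1_r (-2) 2).2 Uprime_T_m1_2_m1. Qed.
Lemma Uprime_T_m2_1_1 : U (T (-2) 1 1).
Proof. exact: (@Uprime_T_mid1_l (-2) 1).2 (@Uprime_T0r 1 (-2)). Qed.
Lemma Uprime_T_m2_1_2 : U (T (-2) 1 2).
Proof. exact: (@Uprime_T_mid1_l (-2) 2).2 Uprime_T_1_m2_1. Qed.
Lemma Uprime_T_m2_2_2 : U (T (-2) 2 2).
Proof.
rewrite (word212_N222 hB); apply/(Uprime_powzrE (-1))/(Uprime_powzlE 1).
exact: Uprime_T_2_2_m2.
Qed.
Lemma Uprime_T_m1_m2_1 : U (T (-1) (-2) 1).
Proof. exact: (@Uprime_T_mid1_r 0 (-2)).1 (@Uprime_T0l 1 (-2)). Qed.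
Lemma Uprime_T_m1_m1_m2 : U (T (-1) (-1) (-2)).
Proof. exact: (@Uprime_T_midN1_r (-1) (-2)).2 (@Uprime_T0l (-2) (-1)). Qed.
Lemma Uprime_T_m1_m1_m1 : U (T (-1) (-1) (-1)).
Proof. exact: (@Uprime_T_midN1_l (-1) (-2)).1 Uprime_T_m1_m1_m2. Qed.
Lemma Uprime_T_m1_m1_1 : U (T (-1) (-1) 1).
Proof. exact: (@Uprime_T_mid1_r 0 (-1)).1 (@Uprime_T0l 1 (-1)). Qed.
Lemma Uprime_T_m1_m1_2 : U (T (-1) (-1) 2).
Proof. exact: (@Uprime_T_midN1_l (-1) 1).1 Uprime_T_m1_m1_1. Qed.
Lemma Uprime_T_m1_1_1 : U (T (-1) 1 1).
Proof. exact: (@Uprime_T_mid1_r 0 1).1 (@Uprime_T0l 1 1). Qed.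
Lemma Uprime_T_m1_1_2 : U (T (-1) 1 2).
Proof. exact: (@Uprime_T_midN1_l 1 1).1 Uprime_T_1_m1_1. Qed.
Lemma Uprime_T_m1_2_1 : U (T (-1) 2 1).
Proof. exact: (@Uprime_T_mid1_r 0 2).1 (@Uprime_T0l 1 2). Qed.
Lemma Uprime_T_1_m2_m2 : U (T 1 (-2) (-2)).
Proof. exact: (@Uprime_T_mid1_l (-2) (-1)).1 Uprime_T_m2_1_m1. Qed.
Lemma Uprime_T_1_m2_m1 : U (T 1 (-2) (-1)).
Proof. exact: (@Uprime_T_mid1_l (-2) 0).1 (@Uprime_T0r (-2) 1). Qed.
Lemma Uprime_T_1_m1_m2 : U (T 1 (-1) (-2)).
Proof. exact: (@Uprime_T_midN1_l 1 (-2)).2 Uprime_T_m1_1_m1. Qed.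
Lemma Uprime_T_1_m1_m1 : U (T 1 (-1) (-1)).
Proof. exact: (@Uprime_T_mid1_l (-1) 0).1 (@Uprime_T0r (-1) 1). Qed.
Lemma Uprime_T_1_1_m2 : U (T 1 1 (-2)).
Proof. exact: (@Uprime_T_mid1_r 1 (-2)).2 (@Uprime_T0l (-2) 1). Qed.
Lemma Uprime_T_1_1_m1 : U (T 1 1 (-1)).
Proof. exact: (@Uprime_T_mid1_l 1 0).1 (@Uprime_T0r 1 1). Qed.
Lemma Uprime_T_1_1_1 : U (T 1 1 1).
Proof. exact: (@Uprime_T_mid1_l 1 1).2 (@Uprime_T0r 1 1). Qed.
Lemma Uprime_T_1_1_2 : U (T 1 1 2).
Proof. exact: (@Uprime_T_mid1_l 1 2).2 Uprime_T_1_1_1. Qed.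
Lemma Uprime_T_1_2_m1 : U (T 1 2 (-1)).
Proof. exact: (@Uprime_T_mid1_l 2 0).1 (@Uprime_T0r 2 1). Qed.
Lemma Uprime_T_2_m2_m2 : U (T 2 (-2) (-2)).
Proof.
rewrite (word212_2N2N2 hB); apply/(Uprime_powzrE 1)/(Uprime_powzlE (-1)).
exact: Uprime_T_m2_m2_2.
Qed.
Lemma Uprime_T_2_m1_m2 : U (T 2 (-1) (-2)).
Proof. exact: (@Uprime_T_midN1_l 2 (-2)).2 Uprime_T_m1_2_m1. Qed.
Lemma Uprime_T_2_m1_m1 : U (T 2 (-1) (-1)).
Proof. exact: (@Uprime_T_midN1_r 1 (-1)).1 Uprime_T_1_m1_m1. Qed.
Lemma Uprime_T_2_1_m2 : U (T 2 1 (-2)).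
Proof. exact: (@Uprime_T_mid1_r 2 (-2)).2 Uprime_T_1_m2_1. Qed.
Lemma Uprime_T_2_1_m1 : U (T 2 1 (-1)).
Proof. exact: (@Uprime_T_midN1_r 1 1).1 Uprime_T_1_m1_1. Qed.
Lemma Uprime_T_2_1_1 : U (T 2 1 1).
Proof. exact: (@Uprime_T_mid1_r 2 1).2 Uprime_T_1_1_1. Qed.
Lemma Uprime_T_2_1_2 : U (T 2 1 2).
Proof. exact: (@Uprime_T_mid1_l 2 2).2 Uprime_T_1_2_1. Qed.
Lemma Uprime_T_m2_2_1 : U (T (-2) 2 1).
Proof. exact: (@Uprime_T_mid1_r (-1) 2).1 Uprime_T_m1_1_2. Qed.
Lemma Uprime_T_m1_m2_2 : U (T (-1) (-2) 2).
Proof. exact: (@Uprime_T_midN1_l (-2) 1).1 Uprime_T_m2_m1_1. Qed.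
Lemma Uprime_T_1_2_m2 : U (T 1 2 (-2)).
Proof. exact: (@Uprime_T_mid1_l 2 (-1)).1 Uprime_T_2_1_m1. Qed.
Lemma Uprime_T_2_m2_m1 : U (T 2 (-2) (-1)).
Proof. exact: (@Uprime_T_midN1_r 1 (-2)).1 Uprime_T_1_m1_m2. Qed.
Lemma Uprime_T_m2_m2_m1 : U (T (-2) (-2) (-1)).
Proof.
have := Uprime_T_window_l Uprime_T_m2_m1_m2 Uprime_T_m1_m1_m2 (@Uprime_T0l (-1) (-2))
  Uprime_T_1_m1_m2 Uprime_T_2_m1_m2 (-3).
exact: (@Uprime_T_midN1_r (-3) (-2)).1.
Qed.
Lemma Uprime_T_m2_1_m2 : U (T (-2) 1 (-2)).
Proof.
have := Uprime_T_window_r Uprime_T_1_m2_m2 Uprime_T_1_m2_m1 (@Uprime_T0r 1 (-2))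
  Uprime_T_1_m2_1 Uprime_T_1_m2_2 (-3).
exact: (@Uprime_T_mid1_l (-2) (-2)).2.
Qed.
Lemma Uprime_T_m1_m2_m2 : U (T (-1) (-2) (-2)).
Proof.
have := Uprime_T_window_r Uprime_T_m2_m1_m2 Uprime_T_m2_m1_m1 (@Uprime_T0r (-2) (-1))
  Uprime_T_m2_m1_1 Uprime_T_m2_m1_2 (-3).
exact: (@Uprime_T_midN1_l (-2) (-3)).1.
Qed.
Lemma Uprime_T_1_m1_2 : U (T 1 (-1) 2).
Proof.
have := Uprime_T_window_r Uprime_T_m1_1_m2 Uprime_T_m1_1_m1 (@Uprime_T0r (-1) 1)
  Uprime_T_m1_1_1 Uprime_T_m1_1_2 3.
exact: (@Uprime_T_midN1_l 1 2).2.
Qed.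
Lemma Uprime_T_1_2_2 : U (T 1 2 2).
Proof.
have := Uprime_T_window_r Uprime_T_2_1_m2 Uprime_T_2_1_m1 (@Uprime_T0r 2 1)
  Uprime_T_2_1_1 Uprime_T_2_1_2 3.
exact: (@Uprime_T_mid1_l 2 3).1.
Qed.
Lemma Uprime_T_2_m1_1 : U (T 2 (-1) 1).
Proof.
have := Uprime_T_window_l Uprime_T_m2_1_m1 Uprime_T_m1_1_m1 (@Uprime_T0l 1 (-1))
  Uprime_T_1_1_m1 Uprime_T_2_1_m1 3.
exact: (@Uprime_T_midN1_r 2 1).2.
Qed.
Lemma Uprime_T_2_2_1 : U (T 2 2 1).
Proof.
have := Uprime_T_window_l Uprime_T_m2_1_2 Uprime_T_m1_1_2 (@Uprime_T0l 1 2)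
  Uprime_T_1_1_2 Uprime_T_2_1_2 3.
exact: (@Uprime_T_mid1_r 3 2).1.
Qed.
Lemma Uprime_T_m1_2_2 : U (T (-1) 2 2).
Proof. exact: (@Uprime_T_midN1_l 2 1).1 Uprime_T_2_m1_1. Qed.
Lemma Uprime_T_2_2_m1 : U (T 2 2 (-1)).
Proof. exact: (@Uprime_T_midN1_r 1 2).1 Uprime_T_1_m1_2. Qed.
Lemma Uprime_T_2_m2_1 : U (T 2 (-2) 1).
Proof.
have := Uprime_T_window_l Uprime_T_m2_1_m2 Uprime_T_m1_1_m2 (@Uprime_T0l 1 (-2))
  Uprime_T_1_1_m2 Uprime_T_2_1_m2 3.
exact: (@Uprime_T_mid1_r 3 (-2)).1.
Qed.
Lemma Uprime_T_2_m1_2 : U (T 2 (-1) 2).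
Proof.
have := Uprime_T_window_r Uprime_T_m1_2_m2 Uprime_T_m1_2_m1 (@Uprime_T0r (-1) 2)
  Uprime_T_m1_2_1 Uprime_T_m1_2_2 3.
exact: (@Uprime_T_midN1_l 2 2).2.
Qed.
Lemma Uprime_T_m2_2_m1 : U (T (-2) 2 (-1)).
Proof.
have := Uprime_T_window_l Uprime_T_m2_m1_2 Uprime_T_m1_m1_2 (@Uprime_T0l (-1) 2)
  Uprime_T_1_m1_2 Uprime_T_2_m1_2 (-3).
exact: (@Uprime_T_midN1_r (-3) 2).1.
Qed.

#[local] Hint Resolve Uprime_T0l Uprime_T0m Uprime_T0r
  Uprime_T_1_2_1 Uprime_T_m1_m2_m1 Uprime_T_m1_2_m1 Uprime_T_1_m2_1
  Uprime_T_2_2_2 Uprime_T_m2_m2_m2 Uprime_T_1_m2_2 Uprime_T_m1_2_m2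
  Uprime_T_m1_1_m1 Uprime_T_1_m1_1 Uprime_T_m2_m2_2 Uprime_T_2_2_m2
  Uprime_T_2_m2_2 Uprime_T_m2_2_m2 Uprime_T_m2_1_m1 Uprime_T_m1_1_m2
  Uprime_T_m2_m2_1 Uprime_T_m2_m1_m2 Uprime_T_m2_m1_m1 Uprime_T_m2_m1_1
  Uprime_T_m2_m1_2 Uprime_T_m2_1_1 Uprime_T_m2_1_2 Uprime_T_m2_2_2
  Uprime_T_m1_m2_1 Uprime_T_m1_m1_m2 Uprime_T_m1_m1_m1 Uprime_T_m1_m1_1
  Uprime_T_m1_m1_2 Uprime_T_m1_1_1 Uprime_T_m1_1_2 Uprime_T_m1_2_1
  Uprime_T_1_m2_m2 Uprime_T_1_m2_m1 Uprime_T_1_m1_m2 Uprime_T_1_m1_m1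
  Uprime_T_1_1_m2 Uprime_T_1_1_m1 Uprime_T_1_1_1 Uprime_T_1_1_2
  Uprime_T_1_2_m1 Uprime_T_2_m2_m2 Uprime_T_2_m1_m2 Uprime_T_2_m1_m1
  Uprime_T_2_1_m2 Uprime_T_2_1_m1 Uprime_T_2_1_1 Uprime_T_2_1_2
  Uprime_T_m2_2_1 Uprime_T_m1_m2_2 Uprime_T_1_2_m2 Uprime_T_2_m2_m1
  Uprime_T_m2_m2_m1 Uprime_T_m2_1_m2 Uprime_T_m1_m2_m2 Uprime_T_1_m1_2
  Uprime_T_1_2_2 Uprime_T_2_m1_1 Uprime_T_2_2_1 Uprime_T_m1_2_2
  Uprime_T_2_2_m1 Uprime_T_2_m2_1 Uprime_T_2_m1_2 Uprime_T_m2_2_m1 : core.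

Lemma Uprime_T p q r : U (T p q r).
Proof.
(* the 125 goals left by the three reductions are closed by the hints above *)
by apply: Uprime_T_window_l; apply: Uprime_T_window_m; apply: Uprime_T_window_r.
Qed.

Lemma Uprime_u2u1u2 : subM (mulM (mulM (genM s2) (genM s1)) (genM s2)) U.
Proof.
have U_pow i j k : U (s2 ^+ i * s1 ^+ j * s2 ^+ k) := Uprime_T i j k.
have U_gen x y z : genM s2 x -> genM s1 y -> genM s2 z -> U (x * y * z).
  move=> Gx Gy Gz; have -> : x * y * z = 1 * x * (y * z) by rewrite mul1r mulrA.
  apply: (genM_sandwich Uprime_submod) Gx => i; rewrite mul1r mulrA.
  apply: (genM_sandwich Uprime_submod) Gy => j; rewrite -[X in U X]mulr1.
  by apply: (genM_sandwich Uprime_submod) Gz => k; rewrite mulr1.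
apply: spanM_sub Uprime_submod _ => _ [w [z [Gw Gz ->]]].
apply: (spanM_sub (S := fun w => U (w * z))) Gw => [|_ [x [y [Gx Gy ->]]]].
  exact: submod_preim Uprime_submod (linear_mulr z).
exact: U_gen.
Qed.

End Uprime.

Theorem proposition4p2 (R : comUnitRingType) (A : algType R)
    (a b c d e : R) (s1 s2 t1 t2 : A) :
  e \is a GRing.unit ->
  s1 * t1 = 1 -> t1 * s1 = 1 -> s2 * t2 = 1 -> t2 * s2 = 1 ->
  s1 * s2 * s1 = s2 * s1 * s2 ->
  s1 ^+ 5 = a *: s1 ^+ 4 + b *: s1 ^+ 3 + c *: s1 ^+ 2 + d *: s1 + e%:A ->
  s2 ^+ 5 = a *: s2 ^+ 4 + b *: s2 ^+ 3 + c *: s2 ^+ 2 + d *: s2 + e%:A ->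
  subM (mulM (mulM (genM s2) (genM s1)) (genM s2)) (Uprime s1 s2 t1 t2).
Proof.
move=> eU st1 ts1 st2 ts2 braid quintic1 quintic2.
exact: Uprime_u2u1u2 eU (And5 st1 ts1 st2 ts2 braid) quintic1 quintic2.
Qed.
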